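(* For any growth control function $g$ and any strictly increasing sequence of integers $(p_j)_{j\in\mathbb{N}_0}$ with $p_0=0$, there exists a weight sequence $\boldsymbol{M}=(M_p)_p$, with quotients $m_p=M_{p+1}/M_p$, such that (i) $m_p\le g(p)$ for all $p\in\mathbb{N}_0$, and (ii) $m_{p_j}=g(p_j)$ for all $j\in\mathbb{N}_0$.
   Context: A growth control function is a strictly increasing function $g\colon[0,\infty)\to[1,\infty)$ with $g(0)=1$ and $\lim_{t\to\infty}g(t)=\infty$. A weight sequence is a sequence $\boldsymbol{M}=(M_p)_{p\in\mathbb{N}_0}$ of positive reals with $M_0=1$, $M_p^2\le M_{p-1}M_{p+1}$ for $p\ge1$, and $m_p=M_{p+1}/M_p\to\infty$. *)

From Stdlib Require Import Reals.
Open Scope R_scope.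

(* Growth control function g : [0,oo) -> [1,oo), strictly increasing,
   g 0 = 1, g t -> +oo.  Represented as a total function R -> R whose
   relevant properties are required on [0,oo) only. *)
Definition growth_control (g : R -> R) : Prop :=
  (forall t, 0 <= t -> 1 <= g t) /\
  (forall s t, 0 <= s -> s < t -> g s < g t) /\
  g 0 = 1 /\
  (forall K : R, exists T : R, 0 <= T /\ forall t, T <= t -> K <= g t).

Definition quot (M : nat -> R) (p : nat) : R := M (S p) / M p.

Definition weight_sequence (M : nat -> R) : Prop :=
  (forall p, 0 < M p) /\
  M 0%nat = 1 /\
  (forall p, (1 <= p)%nat -> M p ^ 2 <= M (p - 1)%nat * M (p + 1)%nat) /\
  (forall K : R, exists N : nat, forall p, (N <= p)%nat -> K <= quot M p).

(* Take for m_p the value of g at the largest node p_j <= p.  This step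
   function lies below g (g is increasing), agrees with g at every node,
   is nondecreasing, and tends to infinity because the nodes do and g does.
   A nondecreasing positive sequence of quotients m_p is the quotient
   sequence of the log-convex sequence M_p = m_0 ... m_(p-1). *)
From Stdlib Require Import Reals.
From Stdlib Require Import Lra Lia ClassicalDescription.
Open Scope R_scope.

Fixpoint prod_quotients (m : nat -> R) (p : nat) : R :=
  match p with
  | O => 1
  | S q => prod_quotients m q * m q
  end.

Section ProdQuotients.
Variable m : nat -> R.
Hypothesis m_pos : forall p, 0 < m p.

Lemma prod_quotients_pos p : 0 < prod_quotients m p.
Proof.
  induction p as [|p IH]; simpl; [lra|].
  apply Rmult_lt_0_compat; auto.
Qed.

Lemma quot_prod_quotients p : quot (prod_quotients m) p = m p.
Proof.
  unfold quot; simpl.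
  pose proof (prod_quotients_pos p).
  field; lra.
Qed.

Lemma weight_sequence_prod_quotients :
  (forall p, m p <= m (S p)) ->
  (forall K, exists N, forall p, (N <= p)%nat -> K <= m p) ->
  weight_sequence (prod_quotients m).
Proof.
  intros m_S m_unbounded.
  split; [exact prod_quotients_pos|split; [reflexivity|split]].
  - intros [|q] Hq; [lia|].
    replace (S q - 1)%nat with q by lia.
    replace (S q + 1)%nat with (S (S q)) by lia.
    simpl.
    pose proof (prod_quotients_pos q).
    pose proof (m_pos q).
    pose proof (m_S q).
    assert (Hsq : 0 < prod_quotients m q * prod_quotients m q * m q)
      by (repeat apply Rmult_lt_0_compat; auto).
    nra.
  - intro K.
    destruct (m_unbounded K) as [N HN].
    exists N; intros p Hp.
    rewrite quot_prod_quotients; auto.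
Qed.

End ProdQuotients.

Section StepBelowGrowth.
Variable g : R -> R.
Variable node : nat -> Prop.
Hypothesis g_ge1 : forall t, 0 <= t -> 1 <= g t.
Hypothesis g_incr : forall s t, 0 <= s -> s < t -> g s < g t.

Fixpoint step (p : nat) : R :=
  match p with
  | O => g 0
  | S q => if excluded_middle_informative (node (S q)) then g (INR (S q))
           else step q
  end.

Lemma g_INR_S p : g (INR p) < g (INR (S p)).
Proof.
  apply g_incr; [apply pos_INR|].
  rewrite S_INR; lra.
Qed.

Lemma step_ge1 p : 1 <= step p.
Proof.
  induction p as [|p IH]; cbn [step]; [apply g_ge1; lra|].
  destruct excluded_middle_informative; [apply g_ge1, pos_INR|exact IH].
Qed.

Lemma step_le_g p : step p <= g (INR p).
Proof.
  induction p as [|p IH]; simpl; [lra|].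
  destruct excluded_middle_informative; [lra|].
  pose proof (g_INR_S p); simpl in *; lra.
Qed.

Lemma step_node p : node p -> step p = g (INR p).
Proof.
  intro Hp; destruct p as [|q]; simpl; [reflexivity|].
  destruct excluded_middle_informative; [reflexivity|contradiction].
Qed.

Lemma step_S p : step p <= step (S p).
Proof.
  simpl; destruct excluded_middle_informative; [|lra].
  pose proof (step_le_g p).
  pose proof (g_INR_S p); simpl in *; lra.
Qed.

Lemma step_mono p q : (p <= q)%nat -> step p <= step q.
Proof.
  induction 1 as [|q _ IH]; [lra|].
  pose proof (step_S q); lra.
Qed.

Lemma step_unbounded :
  (forall K, exists T, 0 <= T /\ forall t, T <= t -> K <= g t) ->
  (forall n, exists p, (n <= p)%nat /\ node p) ->
  forall K, exists N, forall p, (N <= p)%nat -> K <= step p.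
Proof.
  intros g_unbounded nodes_unbounded K.
  destruct (g_unbounded K) as [T [_ HT]].
  destruct (INR_unbounded T) as [n Hn].
  destruct (nodes_unbounded n) as [N [HnN HN]].
  exists N; intros p Hp.
  apply Rle_trans with (step N); [|exact (step_mono N p Hp)].
  rewrite (step_node N HN); apply HT.
  pose proof (le_INR _ _ HnN); lra.
Qed.

End StepBelowGrowth.

Lemma strictly_increasing_ge_id (f : nat -> nat) :
  (forall j k, (j < k)%nat -> (f j < f k)%nat) -> forall j, (j <= f j)%nat.
Proof.
  intros f_incr j; induction j as [|j IH]; [lia|].
  specialize (f_incr j (S j) (Nat.lt_succ_diag_r j)); lia.
Qed.

Theorem proposition4p8 (g : R -> R) (pj : nat -> nat) :
  growth_control g ->
  (forall j k, (j < k)%nat -> (pj j < pj k)%nat) ->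
  pj 0%nat = 0%nat ->
  exists M : nat -> R,
    weight_sequence M /\
    (forall p : nat, quot M p <= g (INR p)) /\
    (forall j : nat, quot M (pj j) = g (INR (pj j))).
Proof.
  intros [g_ge1 [g_incr [_ g_unbounded]]] pj_incr _.
  set (node p := exists j, pj j = p).
  set (m := step g node).
  assert (m_pos : forall p, 0 < m p).
  { intro p; pose proof (step_ge1 g node g_ge1 p); unfold m; lra. }
  exists (prod_quotients m).
  split; [|split].
  - apply weight_sequence_prod_quotients; [exact m_pos| |].
    + exact (step_S g node g_incr).
    + apply step_unbounded; [exact g_incr|exact g_unbounded|].
      intro n; exists (pj n); split.
      * exact (strictly_increasing_ge_id pj pj_incr n).
      * exists n; reflexivity.
  - intro p; rewrite quot_prod_quotients by exact m_pos.
    exact (step_le_g g node g_incr p).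
  - intro j; rewrite quot_prod_quotients by exact m_pos.
    apply step_node; exists j; reflexivity.
Qed.
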